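(* Suppose Assumption ($\lambda$) holds. For every $\epsilon\in(0,1)$, every $k\ge1$ and every monotone menu $M$ with $k$ items, there exists a menu $M'$ such that: $M'$ has at most $k$ items; for each $(q,p)\in M'$, $p$ is an integer multiple of $\epsilon$ and $q=\epsilon(1+\epsilon)^\ell$ for some integer $\ell\ge0$; and $\operatorname{Rev}(M')\ge\operatorname{Rev}(M)-O((k+\lambda)\epsilon)$.
   Context: Non-linear pricing problem: a seller faces a buyer of type $\theta$ drawn from a known prior; the buyer's value for quantity $q\in[0,1]$ is $v(q;\theta)$, concave (not necessarily monotone) in $q$ with $v(0;\theta)=0$ and $v\le1$, satisfying strict single-crossing: for $\theta_1<\theta_2$, $q_1<q_2$, $v(q_2;\theta_2)-v(q_1;\theta_2)>v(q_2;\theta_1)-v(q_1;\theta_1)$. The seller commits to a menu $M$ of (quantity, price) pairs (the trivial option $(0,0)$ is always available and not counted in the menu size); the buyer selects a pair maximizing $v(q;\theta)-p$. $\operatorname{Rev}(M)$ is the seller's expected revenue (expected price collected, net of a constant cost $c\ge0$ per non-zero quantity sold). A menu is monotone if for all $(q_i,p_i),(q_j,p_j)\in M$ with $q_i<q_j$ we have $p_i\le p_j$. Assumption ($\lambda$): there exists $\lambda>0$ such that $\frac{d}{dq}v(0;\theta)<\lambda$ for all $\theta$. *)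

From HB Require Import structures.
From mathcomp Require Import all_boot all_order all_algebra.
From mathcomp Require Import all_classical all_reals all_analysis.
Set Implicit Arguments. Unset Strict Implicit. Unset Printing Implicit Defensive.
Import Order.TTheory GRing.Theory Num.Theory.
Import numFieldNormedType.Exports.
Local Open Scope classical_set_scope.
Local Open Scope ring_scope.

Section Pricing.
Variable R : realType.

(* Valuation: v q theta = value of a buyer of type theta for quantity q.
   Only q in [0,1] is meaningful. *)
Definition valuation := R -> R -> R.

(* A menu is a finite list of (quantity, price) pairs; the trivial option
   (0,0) is always available and is not part of the list. *)
Definition menu := seq (R * R).

Definition concave01 (f : R -> R) : Prop :=
  forall x y t : R, 0 <= x <= 1 -> 0 <= y <= 1 -> 0 <= t <= 1 ->
    t * f x + (1 - t) * f y <= f (t * x + (1 - t) * y).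

Definition valid_valuation (v : valuation) : Prop :=
  [/\ (forall th, concave01 (fun q => v q th)),
      (forall th, v 0 th = 0),
      (forall q th, 0 <= q <= 1 -> v q th <= 1) &
      (forall th1 th2 q1 q2, th1 < th2 -> 0 <= q1 -> q1 < q2 -> q2 <= 1 ->
         v q2 th1 - v q1 th1 < v q2 th2 - v q1 th2)].

Definition assumption_lambda (v : valuation) (lam : R) : Prop :=
  0 < lam /\
  forall th, exists2 d : R,
    (fun h : R => (v h th - v 0 th) / h) @ (0:R)^'+ --> d
    & d < lam.

Definition menu_in01 (M : menu) : Prop := forall o, o \in M -> 0 <= o.1 <= 1.

Definition monotone_menu (M : menu) : Prop :=
  forall oi oj, oi \in M -> oj \in M -> oi.1 < oj.1 -> oi.2 <= oj.2.

Definition utility (v : valuation) (th : R) (o : R * R) : R := v o.1 th - o.2.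

Definition option_profit (c : R) (o : R * R) : R :=
  o.2 - (if o.1 == 0 then 0 else c).

(* Profit collected from a buyer of type th: the buyer picks a
   utility-maximising option among (0,0) :: M; ties are broken in favour of
   the seller (maximum profit among the buyer's maximisers). *)
Definition buyer_profit (v : valuation) (c : R) (M : menu) (th : R) : R :=
  let opts := (0, 0) :: M in
  let U := \big[Num.max/utility v th (0, 0)]_(o <- M) utility v th o in
  let best := [seq o <- opts | utility v th o == U] in
  \big[Num.max/option_profit c (head (0, 0) best)]_(o <- best)
     option_profit c o.

Definition Rev (P : probability R R) (v : valuation) (c : R) (M : menu)
  : \bar R := (\int[P]_th (buyer_profit v c M th)%:E)%E.

End Pricing.

From HB Require Import structures.
From mathcomp Require Import all_boot all_order all_algebra.
From mathcomp Require Import all_classical all_reals all_analysis.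
From mathcomp Require Import measurable_realfun.
From mathcomp Require Import ring lra.
Import Order.TTheory GRing.Theory Num.Theory.
Import numFieldNormedType.Exports.
Set Implicit Arguments. Unset Strict Implicit. Unset Printing Implicit Defensive.
Local Open Scope classical_set_scope.
Local Open Scope ring_scope.

(* Keep only the options (q, p) with q >= eps and p >= c, lower each price by
   the margin 3 eps (r + 2), where r is the number of options of smaller
   quantity, and round q down to the grid eps (1 + eps)^l and the price down to
   a multiple of eps.  Rounding q down costs the buyer at most eps of value
   (concavity and v <= 1), so the rounding of her former choice a gains her
   nearly the margin of a.  A cheaper option b that she liked less than a has
   a smaller quantity (the menu is monotone), hence a smaller margin, and by
   concavity its rounding is worth no more to her than b.  So she now buys the
   rounding of an option at least as expensive as a, and the seller loses
   O(k eps).  The dropped options earned at most lambda eps, by Assumption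
   (lambda). *)

Section RealDomain.
Variable R : realDomainType.

Lemma bigmax_seq_attained (I : eqType) (s : seq I) (F : I -> R) x :
  \big[Num.max/x]_(i <- s) F i = x \/
  exists2 i, i \in s & \big[Num.max/x]_(j <- s) F j = F i.
Proof.
rewrite big_seq; elim/big_ind: _ => [|y z Hy Hz|i si]; first by left.
- by rewrite /Num.max; case: ifP.
- by right; exists i.
Qed.

Lemma bernoulli_expr (e : R) n :
  0 <= e -> 1 + n%:R * e <= (1 + e) ^+ n.
Proof.
move=> e0; elim: n => [|n IH]; first by rewrite mul0r addr0 expr0.
have h1 : 1 <= (1 + e) ^+ n by apply: exprn_ege1; rewrite lerDl.
rewrite exprS -natr1; nra.
Qed.

End RealDomain.

Section Grid.
Variable R : archiRealFieldType.

Lemma geometric_grid_index (e q : R) :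
  0 < e -> e <= q -> exists l : nat, e * (1 + e) ^+ l <= q < e * (1 + e) ^+ l.+1.
Proof.
move=> e0 e_le_q.
have ex : exists n : nat, q < e * (1 + e) ^+ n.
  have /archi_boundP : 0 <= q / (e * e) by rewrite divr_ge0 ?mulr_ge0 ?ltW// (lt_le_trans e0).
  set N := Num.bound _; rewrite ltr_pdivrMr ?mulr_gt0 // => hN.
  by exists N; have := bernoulli_expr N (ltW e0); nra.
have [[|l] hl hmin] := ex_minnP ex; first by move: hl; rewrite mulr1 ltNge e_le_q.
by exists l; rewrite hl andbT leNgt; apply/negP => /hmin; rewrite ltnn.
Qed.

Lemma geometric_grid_rounding (e : R) : 0 < e ->
  exists g : R -> nat, forall q, e <= q ->
    e * (1 + e) ^+ g q <= q < e * (1 + e) ^+ (g q).+1.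
Proof.
move=> e0; suff /boolp.choice[g Hg] : forall q, exists l : nat, e <= q ->
    e * (1 + e) ^+ l <= q < e * (1 + e) ^+ l.+1 by exists g.
move=> q; have [e_le_q|_] := lerP e q.
  by have [l ?] := geometric_grid_index e0 e_le_q; exists l.
by exists 0%N.
Qed.

Lemma floor_grid_round (e x : R) : 0 < e ->
  x - e < e * (Num.floor (x / e))%:~R <= x.
Proof.
move=> e0; apply/andP; split; last by rewrite -ler_pdivlMl // mulrC floor_le.
have : x < e * ((Num.floor (x / e))%:~R + 1).
  by rewrite -ltr_pdivrMl // mulrC -intrD1 floorD1_gt.
lra.
Qed.

End Grid.

Section Concave01.
Variables (R : realType) (f : R -> R).
Hypotheses (f_concave : concave01 f) (f0 : f 0 = 0).

Lemma concave01_chord [x y : R] : 0 < x -> x <= y -> y <= 1 ->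
  x * f y <= y * f x.
Proof.
move=> x0 xy y1; have y0 := lt_le_trans x0 xy.
have t01 : 0 <= x / y <= 1.
  by apply/andP; split; [rewrite divr_ge0 ?ltW | rewrite ler_pdivrMr // mul1r].
have y01 : 0 <= y <= 1 by rewrite ltW.
have o01 : 0 <= (0 : R) <= 1 by rewrite lexx ler01.
have := f_concave y01 o01 t01.
rewrite f0 !mulr0 !addr0 divfK ?gt_eqF // => H.
have -> : x * f y = y * (x / y * f y) by rewrite mulrA (mulrC y) divfK ?gt_eqF.
by rewrite ler_pM2l.
Qed.

Lemma concave01_increment_le [x y e : R] : 0 < x -> x <= y -> y <= 1 ->
  0 <= e -> y <= (1 + e) * x -> f y <= 1 -> f y - f x <= e.
Proof.
move=> x0 xy y1 e0 ye fy1; have chord := concave01_chord x0 xy y1.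
have y0 := lt_le_trans x0 xy.
have [fy_le0|fy_gt0] := leP (f y) 0.
  suff : y * f y <= y * f x by rewrite ler_pM2l // => ?; lra.
  by apply: le_trans chord; rewrite ler_wnM2r.
suff : y * (f y - f x) <= y * e by rewrite ler_pM2l.
have : (y - x) * f y <= y - x by rewrite ler_piMr // subr_ge0.
nra.
Qed.

Lemma concave01_le_before [x y z : R] : 0 <= x -> x <= y -> y < z -> z <= 1 ->
  f y < f z -> f x <= f y.
Proof.
move=> x0 xy yz z1 fyz; have [->//|xny] := eqVneq x y.
have xy' : x < y by rewrite lt_neqAle xny.
have zx : 0 < z - x by rewrite subr_gt0 (lt_trans xy').
have t01 : 0 <= (y - x) / (z - x) <= 1.
  apply/andP; split; first by rewrite divr_ge0 ?ltW // subr_gt0.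
  by rewrite ler_pdivrMr // mul1r lerD2r ltW.
set t := (y - x) / (z - x) in t01 *.
have ht : t * z + (1 - t) * x = y by rewrite /t; field; rewrite gt_eqF.
have z01 : 0 <= z <= 1 by rewrite z1 andbT (le_trans x0) // ltW // (le_lt_trans xy).
have x01 : 0 <= x <= 1 by rewrite x0 /= (le_trans xy) // ltW // (lt_le_trans yz).
have := f_concave z01 x01 t01; rewrite ht => H.
rewrite leNgt; apply/negP => fxy.
have t_gt0 : 0 < t by rewrite divr_gt0 // subr_gt0.
nra.
Qed.

End Concave01.

Lemma valuation_le_lambda (R : realType) (v : valuation R) lam th q :
  valid_valuation v -> assumption_lambda v lam -> 0 < q -> q <= 1 ->
  v q th <= lam * q.
Proof.
move=> [vc v0 _ _] [_ /(_ th) [d slope_d d_lt]] q0 q1.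
suff : v q th / q <= d.
  by rewrite ler_pdivrMr // => /le_trans; apply; rewrite ler_pM2r // ltW.
rewrite -(cvg_lim _ slope_d) //; apply: limr_ge; first by apply/cvg_ex; exists d.
near=> h.
have h0 : 0 < h by near: h; exact: nbhs_right_gt.
have hq : h <= q by near: h; exact: nbhs_right_le.
rewrite v0 subr0 ler_pdivrMr // mulrAC ler_pdivlMr // mulrC [X in _ <= X]mulrC.
exact: (concave01_chord (vc th) (v0 th) h0 hq q1).
Unshelve. all: end_near.
Qed.

Section Buyer.
Variables (R : realType) (v : valuation R) (c : R).

Definition best_utility (M : menu R) (th : R) : R :=
  \big[Num.max/utility v th (0, 0)]_(w <- M) utility v th w.

Lemma utility_le_best M th w :
  w \in (0, 0) :: M -> utility v th w <= best_utility M th.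
Proof.
rewrite inE => /predU1P[->|wM]; first exact: bigmax_ge_id.
exact: le_bigmax_seq.
Qed.

Lemma best_utility_attained M th :
  exists2 a, a \in (0, 0) :: M & utility v th a = best_utility M th.
Proof.
rewrite /best_utility.
have [->|[a aM ->]] := bigmax_seq_attained M (utility v th) (utility v th (0, 0)).
  by exists (0, 0); rewrite ?mem_head.
by exists a; rewrite // inE aM orbT.
Qed.

Definition best_options (M : menu R) (th : R) :=
  [seq w <- (0, 0) :: M | utility v th w == best_utility M th].

Lemma buyer_profitE M th : buyer_profit v c M th =
  \big[Num.max/option_profit c (head (0, 0) (best_options M th))]_(w <- best_options M th)
    option_profit c w.
Proof. by []. Qed.

Lemma mem_best_options M th w :
  (w \in best_options M th) = (w \in (0, 0) :: M) && (utility v th w == best_utility M th).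
Proof. by rewrite mem_filter andbC. Qed.

Lemma buyer_profit_attained M th : exists2 a, a \in (0, 0) :: M &
  utility v th a = best_utility M th /\ buyer_profit v c M th = option_profit c a.
Proof.
have [a0 a0M a0U] := best_utility_attained M th.
set b := head (0, 0) (best_options M th).
have witness w : w \in best_options M th ->
    buyer_profit v c M th = option_profit c w -> exists2 a, a \in (0, 0) :: M &
    utility v th a = best_utility M th /\ buyer_profit v c M th = option_profit c a.
  by rewrite mem_best_options => /andP[wM /eqP wU] bw; exists w.
have bb : b \in best_options M th.
  rewrite /b; case E : (best_options M th) => [|h t]; last by rewrite mem_head.
  by have := mem_best_options M th a0; rewrite E a0M a0U eqxx.
have [bE|[w wb wE]] := bigmax_seq_attained (best_options M th) (option_profit c)
  (option_profit c b); [exact: witness bb bE | exact: witness wb wE].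
Qed.

Lemma le_buyer_profit M th w : w \in (0, 0) :: M ->
  utility v th w = best_utility M th -> option_profit c w <= buyer_profit v c M th.
Proof.
by move=> wM wU; rewrite buyer_profitE le_bigmax_seq // mem_best_options wM wU eqxx.
Qed.

Lemma buyer_choiceP M th : exists2 a, a \in (0, 0) :: M &
  (forall w, w \in (0, 0) :: M -> utility v th w <= utility v th a) /\
  buyer_profit v c M th = option_profit c a.
Proof.
have [a aM [aU ->]] := buyer_profit_attained M th.
by exists a => //; split => // w /(utility_le_best th); rewrite aU.
Qed.

End Buyer.

Lemma measurable_bigmax d (T : measurableType d) (R : realType) (D : set T)
    (I : Type) (s : seq I) (h0 : T -> R) (h : I -> T -> R) :
  measurable_fun D h0 -> (forall i, measurable_fun D (h i)) ->
  measurable_fun D (fun x => \big[Num.max/h0 x]_(i <- s) h i x).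
Proof.
move=> mh0 mh; elim: s => [|i s IH]; first by under eq_fun do rewrite big_nil.
under eq_fun do rewrite big_cons.
exact: measurable_maxr.
Qed.

Lemma bounded_integrable d (T : measurableType d) (R : realType)
    (P : probability T R) (f : T -> R) K :
  measurable_fun setT f -> (forall x, `|f x| <= K) ->
  P.-integrable setT (EFin \o f).
Proof.
move=> mf fK; apply: measurable_bounded_integrable => //.
  by have /= -> := probability_setT P; rewrite ltry.
exists K; split => [|y Ky x _ /=]; last exact: le_trans (fK x) (ltW Ky).
by rewrite realE (le_trans _ (fK point)).
Qed.

Section Revenue.
Variables (R : realType) (v : valuation R) (c : R).
Hypothesis v_meas : forall q, measurable_fun setT (v q).

Definition profit_bound (M : menu R) : R :=
  \big[Num.max/0]_(w <- (0, 0) :: M) `|option_profit c w|.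

Lemma buyer_profit_bounded M th : `|buyer_profit v c M th| <= profit_bound M.
Proof.
have [a aM [_ ->]] := buyer_profit_attained v c M th.
exact: le_bigmax_seq aM _.
Qed.

Lemma measurable_best_utility M : measurable_fun setT (best_utility v M).
Proof. by apply: measurable_bigmax => [|w]; apply: measurable_funB. Qed.

Lemma measurable_buyer_profit M : measurable_fun setT (buyer_profit v c M).
Proof.
set m0 := - profit_bound M.
have m0_le th : m0 <= buyer_profit v c M th.
  exact/lerNnormlW/buyer_profit_bounded.
have -> : buyer_profit v c M = fun th => \big[Num.max/m0]_(w <- (0, 0) :: M)
    (if utility v th w == best_utility v M th then option_profit c w else m0).
  apply: funext => th; apply: le_anti; apply/andP; split.
    have [a aM [aU ->]] := buyer_profit_attained v c M th.
    by apply: bigmax_sup_seq aM _ _ => //; case: eqP.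
  rewrite big_seq; apply: bigmax_le => // w wM.
  by case: eqP => // wU; exact: le_buyer_profit.
apply: measurable_bigmax => [|w]; first exact: measurable_cst.
apply: measurable_fun_ifT; [|exact: measurable_cst..].
exact: measurable_fun_eqr (measurable_funB _ _) (measurable_best_utility M).
Qed.

Lemma Rev_le_pointwise P M M' E :
  (forall th, buyer_profit v c M th - E <= buyer_profit v c M' th) ->
  (Rev P v c M - E%:E <= Rev P v c M')%E.
Proof.
move=> le_MM'.
have integrable_profit N : P.-integrable setT (EFin \o buyer_profit v c N).
  exact: bounded_integrable (measurable_buyer_profit N) (buyer_profit_bounded N).
have integrable_E : P.-integrable setT (EFin \o cst E).
  by apply: (@bounded_integrable _ _ _ P _ `|E|) => //; exact: measurable_cst.
have -> : E%:E = (\int[P]_th E%:E)%E.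
  by rewrite integral_cst //; have /= -> := probability_setT P; rewrite mule1.
rewrite /Rev -integralB_EFin //; under eq_integral do rewrite -EFinB.
apply: le_integral => //; last by move=> th _; rewrite lee_fin.
- apply: (@bounded_integrable _ _ _ P _ (profit_bound M + `|E|)).
    by apply: measurable_funB; [exact: measurable_buyer_profit | exact: measurable_cst].
  by move=> th; rewrite (le_trans (ler_normB _ _)) // lerD2r buyer_profit_bounded.
- exact: integrable_profit.
Qed.

End Revenue.

(* [lra] ignores the hypotheses of this section unless they are moved to the
   goal: they are elaborated with different canonical instances. *)
Section Rounding.
Variables (R : realType) (v : valuation R) (c lam eps : R) (M : menu R).
Variable g : R -> nat.
Hypotheses (v_valid : valid_valuation v) (v_lam : assumption_lambda v lam).
Hypotheses (c_ge0 : 0 <= c) (eps_gt0 : 0 < eps).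
Hypotheses (M_in01 : menu_in01 M) (M_mono : monotone_menu M).
Hypothesis g_grid : forall q, eps <= q ->
  eps * (1 + eps) ^+ g q <= q < eps * (1 + eps) ^+ (g q).+1.

Definition quantity_rank (w : R * R) : nat := count (< w.1) (unzip1 M).

Definition price_margin (w : R * R) : R := 3 * eps * ((quantity_rank w)%:R + 2).

Definition round_option (w : R * R) : R * R :=
  (eps * (1 + eps) ^+ g w.1,
   eps * (Num.floor ((w.2 - price_margin w) / eps))%:~R).

Definition kept (w : R * R) : bool := (eps <= w.1) && (c <= w.2).

Definition rounded_menu : menu R := [seq round_option w | w <- M & kept w].

Lemma round_quantity_bounds w : eps <= w.1 -> [/\ 0 < (round_option w).1,
  (round_option w).1 <= w.1 & w.1 <= (1 + eps) * (round_option w).1].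
Proof.
move=> /g_grid /andP[lo hi]; split => //.
- by rewrite mulr_gt0 // exprn_gt0 // ltr_wpDr // ltW.
- by move: hi; rewrite exprS mulrCA => /ltW.
Qed.

Lemma round_price_bounds w :
  w.2 - price_margin w - eps < (round_option w).2 <= w.2 - price_margin w.
Proof. exact: floor_grid_round. Qed.

Lemma price_margin_bounds w :
  6 * eps <= price_margin w <= 3 * eps * ((size M)%:R + 2).
Proof.
have rank_le : eps * (quantity_rank w)%:R <= eps * (size M)%:R.
  by rewrite ler_pM2l // ler_nat -(size_map fst) count_size.
have rank_ge0 : 0 <= eps * (quantity_rank w)%:R := mulr_ge0 (ltW eps_gt0) (ler0n _ _).
by rewrite /price_margin; apply/andP; split; nra.
Qed.

Lemma price_margin_lt a b : b \in M -> b.1 < a.1 ->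
  price_margin b + 3 * eps <= price_margin a.
Proof.
move=> bM ba.
have rank_lt : eps * ((quantity_rank b)%:R + 1) <= eps * (quantity_rank a)%:R.
  rewrite ler_pM2l // natr1 ler_nat.
  apply: (@leq_trans (count (<= b.1) (unzip1 M))).
    by rewrite count_lt_le_mem map_f.
  by apply: sub_count => x /= /le_lt_trans; apply.
by rewrite /price_margin; lra.
Qed.

Lemma utility_round_ge th w : eps <= w.1 -> w.1 <= 1 ->
  utility v th w + price_margin w - eps <= utility v th (round_option w).
Proof.
move=> ew w1; have [vc v0 v1 _] := v_valid.
have [q0 q_le q_ge] := round_quantity_bounds ew.
have vw1 : v w.1 th <= 1 by apply: v1; rewrite w1 andbT (le_trans (ltW eps_gt0)).
have := concave01_increment_le (vc th) (v0 th) q0 q_le w1 (ltW eps_gt0) q_ge vw1.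
have /andP[_ p_le] := round_price_bounds w.
rewrite /utility; lra.
Qed.

Lemma size_rounded_menu : (size rounded_menu <= size M)%N.
Proof. by rewrite size_map size_filter count_size. Qed.

Lemma rounded_menu_on_grid o : o \in rounded_menu ->
  (exists z : int, o.2 = eps * z%:~R) /\ (exists l : nat, o.1 = eps * (1 + eps) ^+ l).
Proof. by case/mapP => w _ ->; split; eexists. Qed.

Lemma rounded_menu_in01 : menu_in01 rounded_menu.
Proof.
move=> o /mapP[w]; rewrite mem_filter => /andP[/andP[ew _] wM] {o}->.
have [q_gt0 q_le _] := round_quantity_bounds ew.
have /andP[_ w1_le1] := M_in01 wM.
by rewrite ltW //= (le_trans q_le).
Qed.

Lemma round_option_profit w : eps <= w.1 ->
  option_profit c (round_option w) = (round_option w).2 - c.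
Proof.
by move=> /round_quantity_bounds[q0 _ _]; rewrite /option_profit gt_eqF.
Qed.

Lemma mem_rounded_menu w : w \in M -> kept w -> round_option w \in rounded_menu.
Proof. by move=> wM kw; apply: map_f; rewrite mem_filter kw. Qed.

Lemma rounded_profit_ge (w : R * R) : w \in (0, 0) :: rounded_menu ->
  - (eps * (3 * (size M)%:R + 7)) <= option_profit c w.
Proof.
rewrite inE => /predU1P[->|/mapP[u]].
  rewrite /option_profit eqxx subr0 oppr_le0.
  by rewrite mulr_ge0 ?ltW // addr_ge0 // mulr_ge0.
rewrite mem_filter => /andP[/andP[eu cu] _] ->.
have /andP[p_gt _] := round_price_bounds u.
have /andP[_ margin_le] := price_margin_bounds u.
rewrite round_option_profit //; lra.
Qed.

Lemma kept_of_profitable th (a : R * R) : a \in (0, 0) :: M -> 0 <= utility v th a ->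
  lam * eps < option_profit c a -> a \in M /\ kept a.
Proof.
move=> aM ua pa; have [_ v0 _ _] := v_valid.
have lam_eps_gt0 : 0 < lam * eps by rewrite mulr_gt0 //; case: v_lam.
have {}aM : a \in M.
  move: aM pa; rewrite inE => /predU1P[->|//].
  by rewrite /option_profit /= eqxx subr0 => /(lt_trans lam_eps_gt0); rewrite ltxx.
have /andP[a1_ge0 a1_le1] := M_in01 aM.
have a2_le : a.2 <= v a.1 th by rewrite -subr_ge0.
have [a10|a1_neq0] := eqVneq a.1 0.
  move: pa a2_le; rewrite /option_profit a10 eqxx v0 subr0 => pa a2_le.
  by have := lt_le_trans (lt_trans lam_eps_gt0 pa) a2_le; rewrite ltxx.
move: pa; rewrite /option_profit (negbTE a1_neq0) => pa.
split => //; apply/andP; split; last by lra.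
rewrite leNgt; apply/negP => a1_lt.
have a1_gt0 : 0 < a.1 by rewrite lt_neqAle eq_sym a1_neq0.
have := valuation_le_lambda th v_valid v_lam a1_gt0 a1_le1.
have : lam * a.1 <= lam * eps by rewrite ler_pM2l ?ltW //; case: v_lam.
move: c_ge0; lra.
Qed.

Lemma round_choice_kept th (a b' : R * R) : a \in M -> kept a ->
  0 <= utility v th a -> b' \in (0, 0) :: rounded_menu ->
  (forall w, w \in (0, 0) :: rounded_menu -> utility v th w <= utility v th b') ->
  exists2 b, b \in M /\ kept b & b' = round_option b.
Proof.
move=> aM ka ua b'M' b'_best; have [_ v0 _ _] := v_valid.
have /andP[ea _] := ka; have /andP[_ a1_le1] := M_in01 aM.
have /andP[margin_ge _] := price_margin_bounds a.
have := utility_round_ge th ea a1_le1.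
have : utility v th (round_option a) <= utility v th b'.
  by apply: b'_best; rewrite inE mem_rounded_menu ?orbT.
move: b'M'; rewrite inE => /predU1P[-> | /mapP[b]].
  have -> : utility v th (0, 0) = 0 by rewrite /utility v0 subr0.
  by move: eps_gt0; lra.
by rewrite mem_filter => /andP[kb bM] -> _ _; exists b.
Qed.

Lemma chosen_price_le th (a b : R * R) : a \in M -> kept a ->
  (forall w, w \in (0, 0) :: M -> utility v th w <= utility v th a) ->
  b \in M -> kept b ->
  utility v th (round_option a) <= utility v th (round_option b) -> a.2 <= b.2.
Proof.
move=> aM /andP[ea _] a_best bM /andP[eb _] round_ab.
rewrite leNgt; apply/negP => ba2.
have [vc _ _ _] := v_valid.
have ub : utility v th b <= utility v th a by apply: a_best; rewrite inE bM orbT.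
have ba1 : b.1 < a.1.
  have [ab1|//|ab1] := ltgtP a.1 b.1.
  - by have := M_mono aM bM ab1; lra.
  - by move: ub; rewrite /utility ab1; lra.
have vba : v b.1 th < v a.1 th by move: ub; rewrite /utility; lra.
have /andP[_ a1_le1] := M_in01 aM; have /andP[_ b1_le1] := M_in01 bM.
have [qb_gt0 qb_le _] := round_quantity_bounds eb.
have v_round_b : v (round_option b).1 th <= v b.1 th.
  by apply: (concave01_le_before (vc th) (ltW qb_gt0) qb_le ba1 a1_le1).
have := utility_round_ge th ea a1_le1.
have /andP[pb_gt _] := round_price_bounds b.
have := price_margin_lt bM ba1.
move: round_ab ub v_round_b pb_gt; rewrite /utility; move: eps_gt0; lra.
Qed.

Lemma buyer_profit_rounded_ge th :
  buyer_profit v c M th - (lam * eps + eps * (3 * (size M)%:R + 7))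
    <= buyer_profit v c rounded_menu th.
Proof.
have [_ v0 _ _] := v_valid.
have [a aM [a_best ->]] := buyer_choiceP v c M th.
have [b' b'M' [b'_best ->]] := buyer_choiceP v c rounded_menu th.
have [pa_le|pa_gt] := lerP (option_profit c a) (lam * eps).
  by have := rounded_profit_ge b'M'; lra.
have ua : 0 <= utility v th a.
  by have := a_best _ (mem_head _ _); rewrite /utility v0 subr0.
have [{}aM ka] := kept_of_profitable aM ua pa_gt.
have [b [bM kb] b'E] := round_choice_kept aM ka ua b'M' b'_best; subst b'.
have ab2 : a.2 <= b.2.
  apply: (chosen_price_le aM ka a_best bM kb).
  by apply: b'_best; rewrite inE mem_rounded_menu ?orbT.
have /andP[ea _] := ka; have /andP[eb _] := kb.
have /andP[pb_gt _] := round_price_bounds b.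
have /andP[_ margin_le] := price_margin_bounds b.
move: pa_gt; rewrite round_option_profit // /option_profit gt_eqF ?(lt_le_trans eps_gt0) //.
move: v_lam => [lam_gt0 _]; have : 0 < lam * eps by rewrite mulr_gt0.
lra.
Qed.

End Rounding.

Theorem lemma5 (R : realType) :
  exists C : R, forall (P : probability R R) (v : valuation R) (c lam : R),
    0 <= c ->
    valid_valuation v ->
    (forall q, measurable_fun [set: R] (v q)) ->
    assumption_lambda v lam ->
    forall (eps : R) (k : nat) (M : menu R),
      0 < eps < 1 -> (1 <= k)%N ->
      uniq M -> size M = k -> menu_in01 M -> monotone_menu M ->
      exists M' : menu R,
        [/\ (size M' <= k)%N,
            (forall o, o \in M' ->
               (exists z : int, o.2 = eps * z%:~R) /\
               (exists l : nat, o.1 = eps * (1 + eps) ^+ l)),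
            menu_in01 M' &
            (Rev P v c M - (C * (k%:R + lam) * eps)%:E <= Rev P v c M')%E].
Proof.
exists 10 => P v c lam c_ge0 v_valid v_meas v_lam eps k M /andP[eps_gt0 _] k_ge1
  _ size_M M_in01 M_mono.
have [g g_grid] := geometric_grid_rounding eps_gt0.
exists (rounded_menu c eps M g); split.
- by rewrite -size_M size_rounded_menu.
- exact: rounded_menu_on_grid.
- exact: rounded_menu_in01 eps_gt0 M_in01 g_grid.
apply: (Rev_le_pointwise v_meas) => th.
apply: le_trans _ (buyer_profit_rounded_ge v_valid v_lam c_ge0 eps_gt0 M_in01 M_mono g_grid th).
have lam_gt0 : 0 < lam by case: v_lam.
have : 1 <= k%:R :> R by rewrite ler1n.
rewrite lerD2l lerN2 size_M; nra.
Qed.
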